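(* Let $m\ge0$, $n\ge1$, and let $\lambda\in Q_4(m,n)$ have $m$-Durfee rectangle symbol $(\alpha,\beta)_{(m+j)\times j}$ with $s=\ell(\alpha)$, $t=\ell(\beta)$. Then there exists an integer $k$ with $1\le k\le s$ such that $\alpha_{k+1}\le\beta_k-1$ and $\alpha_k\ge\beta_{k+1}-1$.
   Context: Partitions: $\lambda_1\ge\cdots\ge\lambda_\ell>0$, $\ell(\lambda)=\ell$, $\lambda_i=0$ for $i>\ell$ (in particular $\alpha_{s+1}=0$), $s(\lambda)$ the smallest part with $s(\emptyset)=+\infty$. Rank-set of $\lambda$ $=[-\lambda_1,1-\lambda_2,\dots,\ell-1-\lambda_\ell,\ell,\ell+1,\dots]$. $Q(m,n)$: partitions of $n$ whose rank-set contains $m$. $m$-Durfee rectangle symbol $(\alpha,\beta)_{(m+j)\times j}$ of $\lambda$: $j\ge0$ is the largest integer with $\lambda_{m+j}\ge j$; $\alpha$ is the conjugate of $(\lambda_1-j,\dots,\lambda_{m+j}-j)$ and $\beta=(\lambda_{m+j+1},\lambda_{m+j+2},\dots)$. $Q_4(m,n)$ is the set of $\lambda\in Q(m,n)$ whose symbol has $j\ge1$, $\beta_1=j$, $\ell(\beta)-\ell(\alpha)\ge1$, $\alpha_1=m+j>\alpha_2$ and $s(\beta)\ge2$. (For $\lambda\in Q(m,n)$ with $j\ge1$ one always has $\beta_1=j$.) *)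

From mathcomp Require Import all_boot.
Set Implicit Arguments. Unset Strict Implicit. Unset Printing Implicit Defensive.

(* A partition is a finite nonincreasing sequence of positive naturals
   [:: λ_1; ...; λ_ℓ]; λ_i (1-indexed) is [nth 0 l i.-1], so λ_i = 0 for i > ℓ. *)
Definition is_partition (l : seq nat) : bool :=
  sorted geq l && all (fun x => 0 < x) l.

Definition part (l : seq nat) (i : nat) : nat := if i is i'.+1 then nth 0 l i' else 0.

(* m (>= 0) belongs to the rank-set [-λ_1, 1-λ_2, ..., ℓ-1-λ_ℓ, ℓ, ℓ+1, ...]:
   either m >= ℓ, or m = (i-1) - λ_i for some 1 <= i <= ℓ
   (written with 0-based index r = i-1 as  r = λ_{r+1} + m). *)
Definition in_rankset (m : nat) (l : seq nat) : bool :=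
  (size l <= m) || has (fun r => r == nth 0 l r + m) (iota 0 (size l)).

Definition inQ (m n : nat) (l : seq nat) : bool :=
  [&& is_partition l, sumn l == n & in_rankset m l].

(* j of the m-Durfee rectangle: the largest j >= 0 with λ_{m+j} >= j
   (j = 0 always qualifies; any j >= 1 qualifying has j <= m+j <= ℓ). *)
Definition durfee_j (m : nat) (l : seq nat) : nat :=
  \max_(j < (size l).+1 | (j == 0 :> nat) || (j <= part l (m + j))) j.

Definition conjugate (mu : seq nat) : seq nat :=
  mkseq (fun i => count (fun x => i < x) mu) (\max_(x <- mu) x).

Definition dalpha (m : nat) (l : seq nat) : seq nat :=
  let j := durfee_j m l in conjugate (map (fun x => x - j) (take (m + j) l)).

Definition dbeta (m : nat) (l : seq nat) : seq nat :=
  drop (m + durfee_j m l) l.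

(* Q_4(m,n): j >= 1, β_1 = j, ℓ(β) - ℓ(α) >= 1, α_1 = m + j > α_2, s(β) >= 2
   (s(β) >= 2 means every part of β is >= 2, with s(∅) = +∞). *)
Definition inQ4 (m n : nat) (l : seq nat) : bool :=
  let j := durfee_j m l in
  let a := dalpha m l in
  let b := dbeta m l in
  [&& inQ m n l, 1 <= j, part b 1 == j, size a < size b,
      part a 1 == m + j, part a 2 < m + j
    & all (fun x => 2 <= x) b].

From mathcomp Require Import all_boot.
From mathcomp Require Import zify.

(* Proof of Proposition 4.4.
   The statement is an instance of a discrete intermediate-value principle:
   if b is nonincreasing, the pair (a, b) satisfies the right-hand condition
   b_2 <= a_1 + 1 at the start, and a_{s+1} + 1 <= b_s holds at some s >= 1,
   then at the FIRST index k <= s where a_{k+1} + 1 <= b_k holds, the other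
   inequality b_{k+1} <= a_k + 1 holds as well (lemma [first_crossing]).
   For lambda in Q_4(m,n) we apply it to a = alpha, b = beta, s = l(alpha):
   - beta is nonincreasing, being a suffix of the partition lambda;
   - b_2 <= b_1 = j <= m + j = a_1 starts the process;
   - a_{s+1} = 0 while beta_s >= 2, since s < l(beta) and s(beta) >= 2,
     so the condition holds at k = s (and s >= 1 because alpha_1 = m+j >= 1). *)

(* Discrete intermediate value: if b is nonincreasing, b_2 <= a_1 + 1 and
   a_{s+1} + 1 <= b_s, some k in [1, s] satisfies both inequalities (by
   induction on s: either the condition already holds at s - 1, or s works). *)
Lemma first_crossing (a b : nat -> nat) (s : nat) :
  (forall i, 1 <= i -> b i.+1 <= b i) ->
  b 2 <= a 1 + 1 -> 1 <= s -> a s.+1 + 1 <= b s ->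
  exists k, [/\ 1 <= k, k <= s, a k.+1 + 1 <= b k & b k.+1 <= a k + 1].
Proof.
move=> b_noninc b2_le; elim: s => [//|[|s] IH] _ cross_s.
  by exists 1.
have [cross_prev|no_cross_prev] := leqP (a s.+2 + 1) (b s.+1).
  by have [k [k_pos k_le cross_k back_k]] := IH erefl cross_prev; exists k; split; lia.
exists s.+2; split => //.
have := b_noninc s.+2 erefl; have := b_noninc s.+1 erefl; lia.
Qed.

Lemma part_nonincr (s : seq nat) :
  sorted geq s -> forall i, 1 <= i -> part s i.+1 <= part s i.
Proof.
move=> s_sorted i; case: i => // i _ /=.
case: (ltnP i.+1 (size s)) => hi; last by rewrite nth_default.
have geq_trans : transitive geq by move=> x y z /= h1 h2; apply: leq_trans h2 h1.
apply: (sorted_leq_nth geq_trans (fun x => leqnn x) 0 s_sorted) => //.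
by rewrite inE ltnW.
Qed.

Lemma part_after_size (s : seq nat) : part s (size s).+1 = 0.
Proof. by rewrite /= nth_default. Qed.

Lemma part_ge2 (b : seq nat) (k : nat) :
  all (fun x => 2 <= x) b -> 1 <= k <= size b -> 2 <= part b k.
Proof.
case: k => // k /allP b_ge2 /= ks.
by apply: b_ge2; rewrite mem_nth.
Qed.

Theorem proposition4p4 (m n : nat) (l : seq nat) :
  1 <= n -> inQ4 m n l ->
  exists k : nat,
    [/\ 1 <= k, k <= size (dalpha m l),
        part (dalpha m l) k.+1 + 1 <= part (dbeta m l) k
      & part (dbeta m l) k.+1 <= part (dalpha m l) k + 1].
Proof.
move=> _ /and5P [/and3P [/andP [l_sorted _] _ _] j_pos /eqP beta1 s_lt_t].
move=> /and3P [/eqP alpha1 _ beta_ge2].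
set a := dalpha m l in s_lt_t alpha1 *; set b := dbeta m l in beta1 s_lt_t beta_ge2 *.
have b_sorted : sorted geq b by exact: drop_sorted.
have s_pos : 1 <= size a.
  case: (size a =P 0) alpha1 => [/size0nil -> /= |/eqP]; [lia | by rewrite lt0n].
apply: (@first_crossing (part a) (part b) (size a) (part_nonincr _ b_sorted)) => //.
- by have := part_nonincr _ b_sorted 1 erefl; lia.
- have := @part_ge2 b (size a) beta_ge2; rewrite s_pos ltnW // part_after_size.
  by move=> /(_ isT); lia.
Qed.
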